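(* Let $\sigma_t:\mathcal{M}_t\to\mathcal{P}_t$, $t=0,\dots,T+1$, be functions such that $\Pi_t=\sigma_t(M_t)$ is an information state at each $t=0,\dots,T$. Then for all $t=0,\dots,T$, all $m_t\in[[M_t]]$ and all $u_t\in[[U_t]]$, $$Q_t(m_t,u_t)=\bar{Q}_t\big(\sigma_t(m_t),u_t\big)\quad\text{and}\quad V_t(m_t)=\bar{V}_t\big(\sigma_t(m_t)\big).$$
   Context: Uncertain variables: fix a sample space $\Omega$; an uncertain variable with values in a set $\mathcal{X}$ is a map $X:\Omega\to\mathcal{X}$, with marginal range $[[X]]:=\{X(\omega):\omega\in\Omega\}$; uncertain variables are independent if their joint range is the product of their marginal ranges. System: horizon $T\in\mathbb{N}$. For $t=0,\dots,T$ there are independent disturbances $W_t\in\mathcal{W}_t$, actions $U_t\in\mathcal{U}_t$ taking values in a given set $[[U_t]]\subseteq\mathcal{U}_t$, observations $Y_0=h_0(W_0)$, $Y_{t+1}=h_{t+1}(W_{0:t},U_{0:t})$, and costs $C_t=d_t(W_{0:t},U_{0:t})\in\mathcal{C}_t\subset\mathbb{R}_{\ge0}$. The sets $\mathcal{U}_t,\mathcal{W}_t,\mathcal{Y}_t$ are bounded subsets of a metric space $(\mathcal{S},\eta)$, the $\mathcal{C}_t$ are bounded subsets of $\mathbb{R}_{\ge 0}$, the $h_t$ are Lipschitz and $L$-invertible, and the $d_t$ are Lipschitz. The memory is $M_t=(Y_{0:t},U_{0:t-1})\in\mathcal{M}_t:=\prod_{\ell=0}^t\mathcal{Y}_\ell\times\prod_{\ell=0}^{t-1}\mathcal{U}_\ell$.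 Strategy-independent ranges: for $m_t=(y_{0:t},u_{0:t-1})$ let $\mathcal{W}(m_t)$ be the set of $w_{0:t}\in\prod_{\ell=0}^t[[W_\ell]]$ with $y_0=h_0(w_0)$ and $y_\ell=h_\ell(w_{0:\ell-1},u_{0:\ell-1})$ for $\ell=1,\dots,t$. Let $[[M_t]]$ be the set of such $m_t$ with $u_\ell\in[[U_\ell]]$ and $\mathcal{W}(m_t)\neq\emptyset$. For $m_t\in[[M_t]]$, $u_t\in[[U_t]]$: $[[C_t|m_t,u_t]]:=\{d_t(w_{0:t},u_{0:t}):w_{0:t}\in\mathcal{W}(m_t)\}$, $[[Y_{t+1}|m_t,u_t]]:=\{h_{t+1}(w_{0:t},u_{0:t}):w_{0:t}\in\mathcal{W}(m_t)\}$, $[[M_{t+1}|m_t,u_t]]:=\{(m_t,u_t,y_{t+1}):y_{t+1}\in[[Y_{t+1}|m_t,u_t]]\}$ (with the components rearranged as a memory). For functions $\sigma_t$ on $\mathcal{M}_t$ and $\Pi_t=\sigma_t(M_t)$: $[[\Pi_t]]:=\sigma_t([[M_t]])$, $[[M_t|\pi_t]]:=\{m_t\in[[M_t]]:\sigma_t(m_t)=\pi_t\}$, $[[\Pi_{t+1}|m_t,u_t]]:=\{\sigma_{t+1}(m_{t+1}):m_{t+1}\in[[M_{t+1}|m_t,u_t]]\}$, and for $Z\in\{C_t,Y_{t+1},\Pi_{t+1}\}$, $[[Z|\pi_t,u_t]]:=\bigcup_{m_t\in[[M_t|\pi_t]]}[[Z|m_t,u_t]]$. Memory-based DP: $V_{T+1}\equiv0$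 and for $t=T,\dots,0$, $Q_t(m_t,u_t):=\max\{\sup_{c\in[[C_t|m_t,u_t]]}c,\ \sup_{m_{t+1}\in[[M_{t+1}|m_t,u_t]]}V_{t+1}(m_{t+1})\}$, $V_t(m_t):=\inf_{u_t\in[[U_t]]}Q_t(m_t,u_t)$. Information state: $\Pi_t=\sigma_t(M_t)$ with $\sigma_t:\mathcal{M}_t\to\mathcal{P}_t$, $\mathcal{P}_t$ bounded, such that for all $t=0,\dots,T$, $m_t\in[[M_t]]$, $u_t\in[[U_t]]$: (i) $\sup_{c\in[[C_t|m_t,u_t]]}c=\sup_{c\in[[C_t|\sigma_t(m_t),u_t]]}c$; (ii) $[[\Pi_{t+1}|m_t,u_t]]=[[\Pi_{t+1}|\sigma_t(m_t),u_t]]$. Information-state DP: $\bar V_{T+1}\equiv0$ and for $\pi_t\in[[\Pi_t]]$, $u_t\in[[U_t]]$: $\bar Q_t(\pi_t,u_t):=\max\{\sup_{c\in[[C_t|\pi_t,u_t]]}c,\ \sup_{\pi_{t+1}\in[[\Pi_{t+1}|\pi_t,u_t]]}\bar V_{t+1}(\pi_{t+1})\}$, $\bar V_t(\pi_t):=\inf_{u_t\in[[U_t]]}\bar Q_t(\pi_t,u_t)$. *)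

From HB Require Import structures.
From mathcomp Require Import all_boot all_order all_algebra.
From mathcomp Require Import boolp classical_sets reals constructive_ereal ereal.
Set Implicit Arguments. Unset Strict Implicit. Unset Printing Implicit Defensive.
Import Order.TTheory GRing.Theory Num.Theory.
Local Open Scope classical_set_scope.
Local Open Scope ring_scope.
Local Open Scope ereal_scope.

(* Worst-case (uncertain-variable) partially observed system, described through
   the ranges of its primitive uncertain variables.
   - S      : the ambient space containing all U_t, W_t, Y_t.
   - Wr t   : [[W_t]]  (the W_t are independent, so the joint range of
              W_{0:t} is the product of the Wr l, l <= t).
   - Ur t   : [[U_t]].
   - h0     : observation map Y_0 = h0 W_0.
   - h l    : for l >= 1, Y_l = h l (w_{0:l-1}) (u_{0:l-1}); sequences are
              represented as [seq S] listing entries 0,1,...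
   - d t    : cost C_t = d t (w_{0:t}) (u_{0:t}).
   A memory m_t = (y_{0:t}, u_{0:t-1}) is the pair (m.1, m.2) of sequences
   of sizes t+1 and t. *)

Section System.
Variables (R : realType) (S : pointedType).
Variables (Wr Ur : nat -> set S) (h0 : S -> S) (h : nat -> seq S -> seq S -> S)
          (d : nat -> seq S -> seq S -> R).

Definition memory := (seq S * seq S)%type.

Definition Wm (t : nat) (m : memory) : set (seq S) :=
  [set ws | size ws = t.+1 /\
            (forall l, (l < t.+1)%N -> Wr l (nth point ws l)) /\
            nth point m.1 0 = h0 (nth point ws 0) /\
            (forall l, (0 < l)%N -> (l <= t)%N ->
               nth point m.1 l = h l (take l ws) (take l m.2))].

Definition Mrange (t : nat) : set memory :=
  [set m | size m.1 = t.+1 /\ size m.2 = t /\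
           (forall l, (l < t)%N -> Ur l (nth point m.2 l)) /\
           Wm t m !=set0].

Definition Ccond (t : nat) (m : memory) (u : S) : set R :=
  [set d t ws (rcons m.2 u) | ws in Wm t m].

Definition Ycond (t : nat) (m : memory) (u : S) : set S :=
  [set h t.+1 ws (rcons m.2 u) | ws in Wm t m].

Definition Mnext (t : nat) (m : memory) (u : S) : set memory :=
  [set (rcons m.1 y, rcons m.2 u) | y in Ycond t m u].

Definition esup (A : set R) : \bar R := ereal_sup [set x%:E | x in A].

(* Memory-based DP.  Vmem k t = V_t when k = T+1-t steps remain; Vmem 0 = V_{T+1} = 0. *)
Fixpoint Vmem (k t : nat) (m : memory) : \bar R :=
  match k with
  | 0 => 0
  | k'.+1 =>
      ereal_inf [set maxe (esup (Ccond t m u))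
                          (ereal_sup [set Vmem k' t.+1 m' | m' in Mnext t m u])
                | u in Ur t]
  end.

Definition V (T t : nat) (m : memory) : \bar R := Vmem (T.+1 - t) t m.

Definition Q (T t : nat) (m : memory) (u : S) : \bar R :=
  maxe (esup (Ccond t m u))
       (ereal_sup [set V T t.+1 m' | m' in Mnext t m u]).

Variables (P : Type) (sigma : nat -> memory -> P).

Definition Pirange (t : nat) : set P := sigma t @` Mrange t.
Definition Mof (t : nat) (p : P) : set memory :=
  [set m | Mrange t m /\ sigma t m = p].
Definition PiNext_m (t : nat) (m : memory) (u : S) : set P :=
  [set sigma t.+1 m' | m' in Mnext t m u].
Definition Ccond_pi (t : nat) (p : P) (u : S) : set R :=
  \bigcup_(m in Mof t p) Ccond t m u.
Definition PiNext_pi (t : nat) (p : P) (u : S) : set P :=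
  \bigcup_(m in Mof t p) PiNext_m t m u.

Definition is_info_state_at (t : nat) : Prop :=
  forall m u, Mrange t m -> Ur t u ->
    esup (Ccond t m u) = esup (Ccond_pi t (sigma t m) u) /\
    PiNext_m t m u = PiNext_pi t (sigma t m) u.

(* Information-state DP (values outside [[Pi_t]] are never used). *)
Fixpoint Vbarmem (k t : nat) (p : P) : \bar R :=
  match k with
  | 0 => 0
  | k'.+1 =>
      ereal_inf [set maxe (esup (Ccond_pi t p u))
                          (ereal_sup [set Vbarmem k' t.+1 p' | p' in PiNext_pi t p u])
                | u in Ur t]
  end.

Definition Vbar (T t : nat) (p : P) : \bar R := Vbarmem (T.+1 - t) t p.

Definition Qbar (T t : nat) (p : P) (u : S) : \bar R :=
  maxe (esup (Ccond_pi t p u))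
       (ereal_sup [set Vbar T t.+1 p' | p' in PiNext_pi t p u]).

End System.

From HB Require Import structures.
From mathcomp Require Import all_boot all_order all_algebra.
From mathcomp Require Import boolp classical_sets reals constructive_ereal ereal.

(* Backward induction on the horizon.  Condition (i) of an information state
   matches the cost terms of Q_t and Qbar_t, and condition (ii) says that the
   continuation set [[Pi_{t+1} | sigma_t m_t, u_t]] is the image under
   sigma_{t+1} of [[M_{t+1} | m_t, u_t]]; so Q_t = Qbar_t o sigma_t as soon as
   V_{t+1} = Vbar_{t+1} o sigma_{t+1} on the successor memories.  These are
   admissible memories whenever [[W_{t+1}]] is nonempty; when it is empty,
   every conditional range at time t+1 is empty and both value functions at
   time t+1 are the same constant. *)

Set Implicit Arguments.
Unset Strict Implicit.
Unset Printing Implicit Defensive.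

Local Open Scope classical_set_scope.
Local Open Scope ereal_scope.

Section InformationStateDP.
Variables (R : realType) (S : pointedType).
Variables (Wr Ur : nat -> set S) (h0 : S -> S) (h : nat -> seq S -> seq S -> S)
          (d : nat -> seq S -> seq S -> R).
Variables (P : Type) (sigma : nat -> memory S -> P) (T : nat).

Local Notation Wm := (Wm Wr h0 h).
Local Notation Mrange := (Mrange Wr Ur h0 h).
Local Notation Mnext := (Mnext Wr h0 h).
Local Notation Mof := (Mof Wr Ur h0 h sigma).
Local Notation Q := (Q Wr Ur h0 h d T).
Local Notation V := (V Wr Ur h0 h d T).
Local Notation Qbar := (Qbar Wr Ur h0 h d sigma T).
Local Notation Vbar := (Vbar Wr Ur h0 h d sigma T).

Lemma V_unfold t m : (t <= T)%N -> V t m = ereal_inf [set Q t m u | u in Ur t].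
Proof. by move=> tT; rewrite /V subSn. Qed.

Lemma Vbar_unfold t p :
  (t <= T)%N -> Vbar t p = ereal_inf [set Qbar t p u | u in Ur t].
Proof. by move=> tT; rewrite /Vbar subSn. Qed.

Lemma V_Vbar_of_Q t m p : (t <= T)%N ->
  (forall u, Ur t u -> Q t m u = Qbar t p u) -> V t m = Vbar t p.
Proof.
by move=> tT QE; rewrite V_unfold // Vbar_unfold //; congr ereal_inf; apply: eq_imagel.
Qed.

Lemma Wm_rcons t m u ws w : size m.1 = t.+1 -> size m.2 = t ->
  Wm t m ws -> Wr t.+1 w ->
  Wm t.+1 (rcons m.1 (h t.+1 ws (rcons m.2 u)), rcons m.2 u) (rcons ws w).
Proof.
move=> s1 s2 [sw [HW [H0 Hl]]] Hw; split; first by rewrite size_rcons sw.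
split; last split.
- move=> l; rewrite ltnS leq_eqVlt => /orP[/eqP->|lt].
    by rewrite nth_rcons sw ltnn eqxx.
  by rewrite nth_rcons sw lt; apply: HW.
- by rewrite !nth_rcons s1 sw.
- move=> l l0; rewrite leq_eqVlt => /orP[/eqP->|lt] /=.
    rewrite nth_rcons s1 ltnn eqxx -!cats1 takel_cat ?sw //.
    by rewrite !take_oversize // ?size_cat ?sw ?s2 ?addn1.
  rewrite nth_rcons s1 lt -!cats1 !takel_cat ?sw ?s2 //; last exact: ltnW.
  exact: Hl.
Qed.

Lemma Mnext_Mrange t m u m' w : Mrange t m -> Ur t u -> Wr t.+1 w ->
  Mnext t m u m' -> Mrange t.+1 m'.
Proof.
move=> [s1 [s2 [HU _]]] Hu Hw [_ [ws Hws <-] <-] /=.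
split; first by rewrite size_rcons s1.
split; first by rewrite size_rcons s2.
split; last by exists (rcons ws w); apply: Wm_rcons.
move=> l; rewrite ltnS leq_eqVlt => /orP[/eqP->|lt].
  by rewrite nth_rcons s2 ltnn eqxx.
by rewrite nth_rcons s2 lt; apply: HU.
Qed.

Lemma Wm_empty t m : Wr t = set0 -> Wm t m = set0.
Proof.
move=> W0; apply/seteqP; split=> // ws [_ [HW _]].
by have := HW t (ltnSn t); rewrite W0.
Qed.

Lemma Mof_empty t p : Wr t = set0 -> Mof t p = set0.
Proof.
move=> W0; apply/seteqP; split=> // m [[_ [_ [_]]]].
by rewrite Wm_empty // => -[].
Qed.

Lemma V_Vbar_Wr_empty t m p : Wr t = set0 -> V t m = Vbar t p.
Proof.
move=> W0; rewrite /V /Vbar; case: (T.+1 - t)%N => //= k.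
congr ereal_inf; apply: eq_imagel => u _.
rewrite /Ccond /Mnext /Ycond /Ccond_pi /PiNext_pi Wm_empty // Mof_empty //.
by rewrite !image_set0 !bigcup_set0 !image_set0.
Qed.

Lemma Q_Qbar_of_next t m u : is_info_state_at Wr Ur h0 h d sigma t ->
  Mrange t m -> Ur t u ->
  (forall m', Mnext t m u m' -> V t.+1 m' = Vbar t.+1 (sigma t.+1 m')) ->
  Q t m u = Qbar t (sigma t m) u.
Proof.
move=> info Hm Hu VE; have [CE PiE] := info m u Hm Hu.
rewrite /Q /Qbar -CE -PiE /PiNext_m image_comp.
by congr maxe; congr ereal_sup; apply: eq_imagel.
Qed.

Lemma V_Vbar_next t m u m' :
  (forall m'', Mrange t.+1 m'' -> V t.+1 m'' = Vbar t.+1 (sigma t.+1 m'')) ->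
  Mrange t m -> Ur t u -> Mnext t m u m' ->
  V t.+1 m' = Vbar t.+1 (sigma t.+1 m').
Proof.
move=> VE Hm Hu Hm'; have [W0|/set0P[w Hw]] := eqVneq (Wr t.+1) set0.
  exact: V_Vbar_Wr_empty.
by apply: VE; apply: Mnext_Mrange Hm Hu Hw Hm'.
Qed.

Lemma V_Vbar t m :
  (forall s, (s <= T)%N -> is_info_state_at Wr Ur h0 h d sigma s) ->
  (t <= T.+1)%N -> Mrange t m -> V t m = Vbar t (sigma t m).
Proof.
move=> info /subnKC; move: (T.+1 - t)%N => k.
elim: k t m => [|k IH] t m tk Hm.
  by rewrite /V /Vbar -tk addn0 subnn.
have tT : (t <= T)%N by rewrite -ltnS -tk addnS ltnS leq_addr.
apply: V_Vbar_of_Q => // u Hu; apply: Q_Qbar_of_next => // [|m' Hm'].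
  exact: info.
by apply: V_Vbar_next Hm Hu Hm' => m'' Hm''; apply: IH Hm''; rewrite addSnnS.
Qed.

End InformationStateDP.

Theorem theorem1 (R : realType) (S : pointedType)
  (Wr Ur : nat -> set S) (h0 : S -> S) (h : nat -> seq S -> seq S -> S)
  (d : nat -> seq S -> seq S -> R) (T : nat)
  (P : Type) (sigma : nat -> memory S -> P) :
  (forall t, (t <= T)%N -> is_info_state_at Wr Ur h0 h d sigma t) ->
  forall t, (t <= T)%N ->
  forall (m : memory S) (u : S), Mrange Wr Ur h0 h t m -> Ur t u ->
    Q Wr Ur h0 h d T t m u = Qbar Wr Ur h0 h d sigma T t (sigma t m) u /\
    V Wr Ur h0 h d T t m = Vbar Wr Ur h0 h d sigma T t (sigma t m).
Proof.
move=> info t tT m u Hm Hu; split; last exact: V_Vbar info (leqW tT) Hm.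
apply: (Q_Qbar_of_next (T := T) (info t tT) Hm Hu) => m' Hm'.
by apply: V_Vbar_next Hm Hu Hm' => m'' Hm''; apply: V_Vbar info _ Hm''.
Qed.
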